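(* Let $\theta:\mathbb{R}\to\mathbb{R}$ be convex, $I\subset\mathbb{R}$, $T:I\to\mathbb{R}$ a map, $[a,b]=\overline{\mathrm{co}(T(I))}$ and $y_0\in(a,b)$. (a) Assume $T$ is nondecreasing and define $\underline S(y):=\inf\{x:T(x)\ge y\}$ and $\underline\psi(y):=\int_{y_0}^y\partial_-\theta(z-\underline S(z))\,dz$ for $y\in(a,b)$. Then $\underline\psi$ is continuous on $(a,b)$ and, for every $x\in I$ and all $y'\in[T(x-),T(x)]\cap[a,b]$, \[ -\underline\psi(y')+\theta(y'-x)=\inf_{y\in[a,b]}\big(-\underline\psi(y)+\theta(y-x)\big). \] (b) Assume $T$ is nonincreasing and define $\overline S(y):=\sup\{x:T(x)\ge y\}$ and $\overline\psi(y):=\int_{y_0}^y\partial_-\theta(z-\overline S(z))\,dz$ for $y\in(a,b)$. Then $\overline\psi$ is continuous on $(a,b)$ and, for every $x\in I$ and all $y'\in[T(x+),T(x)]\cap[a,b]$, \[ -\overline\psi(y')+\theta(y'-x)=\sup_{y\in[a,b]}\big(-\overline\psi(y)+\theta(y-x)\big). \]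
   Context: $\partial_-\theta$ denotes the left-hand derivative of $\theta$; $\mathrm{co}$ denotes convex hull; $T(x-)$ and $T(x+)$ denote left and right limits of the monotone map $T$ at $x$. *)

From HB Require Import structures.
From mathcomp Require Import all_boot all_order all_algebra.
From mathcomp Require Import all_classical all_reals all_analysis.
Set Implicit Arguments. Unset Strict Implicit. Unset Printing Implicit Defensive.
Import Order.TTheory GRing.Theory Num.Theory.
Import numFieldNormedType.Exports.
Local Open Scope classical_set_scope.
Local Open Scope ring_scope.

Section defs.
Variable R : realType.

Definition convex_fun (th : R -> R) : Prop :=
  forall x y t : R, 0 <= t -> t <= 1 ->
    th (t * x + (1 - t) * y) <= t * th x + (1 - t) * th y.

Definition convexR (C : set R) : Prop :=
  forall x y t : R, C x -> C y -> 0 <= t -> t <= 1 -> C (t * x + (1 - t) * y).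

Definition co (A : set R) : set R :=
  \bigcap_(C in [set C : set R | convexR C /\ A `<=` C]) C.

Definition lderiv (th : R -> R) (z : R) : R :=
  lim ((fun h : R => (th z - th (z - h)) / h) @ 0^'+).

(* left limit T(x-) of a nondecreasing map T : I -> R, as an extended real:
   sup { T x' : x' in I, x' < x } (= -oo if no such x'). *)
Definition Tleft (I : set R) (T : R -> R) (x : R) : \bar R :=
  ereal_sup [set (T x')%:E | x' in [set x' | I x' /\ x' < x]].

(* right limit T(x+) of a nonincreasing map T : I -> R:
   sup { T x' : x' in I, x' > x } (= -oo if no such x'). *)
Definition Tright (I : set R) (T : R -> R) (x : R) : \bar R :=
  ereal_sup [set (T x')%:E | x' in [set x' | I x' /\ x < x']].

Definition Slow (I : set R) (T : R -> R) (y : R) : R :=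
  inf [set x | I x /\ y <= T x].

Definition Shigh (I : set R) (T : R -> R) (y : R) : R :=
  sup [set x | I x /\ y <= T x].

Definition oint (f : R -> R) (y0 y : R) : \bar R :=
  if y0 <= y then (\int[@lebesgue_measure R]_(z in `[y0, y]) (f z)%:E)%E
  else (- \int[@lebesgue_measure R]_(z in `[y, y0]) (f z)%:E)%E.

Definition psi (th : R -> R) (S : R -> R) (y0 y : R) : \bar R :=
  oint (fun z => lderiv th (z - S z)) y0 y.

End defs.

(* The integrand f z = lderiv th (z - S z) of psi is locally bounded on (a, b),
   since S is monotone there and the left derivative of a convex function is
   nondecreasing; so psi is finite on (a, b) and, being locally a constant plus
   a parameterized Lebesgue integral, continuous there.
   A convex th is the integral of its left derivative: both the integral and
   th v - th u lie between lderiv th u * (v - u) and lderiv th v * (v - u), so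
   their difference is an additive interval function that vanishes.  Hence the
   increments of y |-> - psi y + th (y - x) are integrals of
   lderiv th (z - x) - f z.  When T is nondecreasing and T(x-) <= y' <= T x we
   have S z <= x left of y' and S z >= x right of it, so these increments are
   <= 0 on [a, y'] and >= 0 on [y', b]: y' is a minimiser.  In the nonincreasing
   case every sign is reversed (the facts about S follow from the first case by
   the reflection x |-> -x) and y' is a maximiser.  As psi may be infinite at a
   and b, increments are only taken over intervals with an interior endpoint,
   going through y0 when y and y' are the two endpoints. *)

From HB Require Import structures.
From mathcomp Require Import all_boot all_order all_algebra.
From mathcomp Require Import all_classical all_reals all_analysis.
From mathcomp Require Import measurable_realfun lra ring.
Set Implicit Arguments. Unset Strict Implicit. Unset Printing Implicit Defensive.
Import Order.TTheory GRing.Theory Num.Theory.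
Import numFieldNormedType.Exports.
Local Open Scope classical_set_scope.
Local Open Scope ring_scope.

Section convex_slopes.
Variables (R : realType) (th : R -> R).
Hypothesis th_cvx : convex_fun th.

Lemma convex_three_chord u v w : u < v -> v < w ->
  (th v - th u) * (w - v) <= (th w - th v) * (v - u).
Proof.
move=> uv vw; have wu0 : 0 < w - u by rewrite subr_gt0 (lt_trans uv).
set t := (w - v) / (w - u).
have t01 : 0 <= t <= 1.
  rewrite /t ler_pdivrMr // mul1r divr_ge0 ?subr_ge0 /=; lra.
have /andP[t0 t1] := t01; have := th_cvx u w t0 t1.
have -> : t * u + (1 - t) * w = v by rewrite /t; field; rewrite gt_eqF.
rewrite -(ler_pM2r wu0).
have -> : (t * th u + (1 - t) * th w) * (w - u) = (w - v) * th u + (v - u) * th w.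
  by rewrite /t; field; rewrite gt_eqF.
by move=> H; rewrite -subr_ge0; nra.
Qed.

Let slope u v := (th v - th u) / (v - u).

Lemma convex_slope_le u v w : u < v -> v < w -> slope u v <= slope v w.
Proof.
move=> uv vw; rewrite /slope ler_pdivrMr ?subr_gt0 // mulrAC ler_pdivlMr ?subr_gt0 //.
exact: convex_three_chord.
Qed.

Lemma convex_slope_leR u v w : u < v -> v < w -> slope u w <= slope v w.
Proof.
move=> uv vw; have := convex_three_chord uv vw.
rewrite /slope ler_pdivrMr ?subr_gt0 ?(lt_trans uv) // mulrAC ler_pdivlMr ?subr_gt0 //.
by move=> H; nra.
Qed.

End convex_slopes.

Section left_derivative.
Variables (R : realType) (th : R -> R).
Hypothesis th_cvx : convex_fun th.

Let left_slope z h := (th z - th (z - h)) / h.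

Let left_slope_nonincreasing z :
  {in `]0, +oo[ &, nonincreasing_fun (left_slope z)}.
Proof.
move=> h1 h2; rewrite !in_itv /= !andbT => h10 h20.
rewrite le_eqVlt => /predU1P[-> //|h12].
have := @convex_slope_leR _ _ th_cvx (z - h2) (z - h1) z.
by rewrite /left_slope !subKr; apply; lra.
Qed.

Let left_slope_le z w h : 0 < h -> z < w ->
  left_slope z h <= (th w - th z) / (w - z).
Proof.
move=> h0 zw; have := @convex_slope_le _ _ th_cvx (z - h) z w.
by rewrite /left_slope subKr; apply; lra.
Qed.

Let left_slope_bounded z : has_ubound [set left_slope z h | h in `]0, +oo[].
Proof.
exists ((th (z + 1) - th z) / (z + 1 - z)) => y [h].
by rewrite /= in_itv /= andbT => h0 <-; apply: left_slope_le; lra.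
Qed.

Lemma lderiv_sup z : lderiv th z = sup [set left_slope z h | h in `]0, +oo[].
Proof.
apply: cvg_lim => //.
apply: (@nonincreasing_at_right_cvgr _ _ 0 (BInfty _ false)) => //.
  exact: left_slope_nonincreasing.
exact: left_slope_bounded.
Qed.

Lemma slope_le_lderiv u v : u < v -> (th v - th u) / (v - u) <= lderiv th v.
Proof.
move=> uv; rewrite lderiv_sup; have -> : (th v - th u) / (v - u) = left_slope v (v - u).
  by rewrite /left_slope subKr.
apply: ub_le_sup; first exact: left_slope_bounded.
by exists (v - u); rewrite //= in_itv /= andbT subr_gt0.
Qed.

Lemma lderiv_le_slope u v : u < v -> lderiv th u <= (th v - th u) / (v - u).
Proof.
move=> uv; rewrite lderiv_sup; apply: ge_sup.
  by exists (left_slope u 1), 1; rewrite //= in_itv /= andbT.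
by move=> y [h]; rewrite /= in_itv /= andbT => h0 <-; exact: left_slope_le.
Qed.

Lemma lderiv_nondecreasing : nondecreasing_fun (lderiv th).
Proof.
move=> u v; rewrite le_eqVlt => /predU1P[-> //|uv].
exact: le_trans (lderiv_le_slope uv) (slope_le_lderiv uv).
Qed.

Lemma lderiv_secant u v : u <= v ->
  lderiv th u * (v - u) <= th v - th u <= lderiv th v * (v - u).
Proof.
rewrite le_eqVlt => /predU1P[->|uv]; first by rewrite !subrr !mulr0 lexx.
have vu0 : 0 < v - u by rewrite subr_gt0.
by rewrite -ler_pdivlMr // lderiv_le_slope //= -ler_pdivrMr // slope_le_lderiv.
Qed.

Lemma lderiv_measurable : measurable_fun setT (lderiv th).
Proof. exact: nondecreasing_measurable lderiv_nondecreasing. Qed.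

End left_derivative.

Lemma lderiv_shift (R : realType) (th : R -> R) x z :
  lderiv (fun y => th (y - x)) z = lderiv th (z - x).
Proof. by rewrite /lderiv; under eq_fun do rewrite [_ - _ - x]addrAC. Qed.

Lemma convex_fun_shift (R : realType) (th : R -> R) x :
  convex_fun th -> convex_fun (fun y => th (y - x)).
Proof.
move=> th_cvx u w t t0 t1 /=.
have -> : t * u + (1 - t) * w - x = t * (u - x) + (1 - t) * (w - x) by ring.
exact: th_cvx.
Qed.

Section additive_interval_function.
Variables (R : realType) (D : R -> R -> R) (g : R -> R).
Hypothesis D_add : forall u v w, u <= v -> v <= w -> D u w = D u v + D v w.
Hypothesis D_small : forall u v, u <= v -> `|D u v| <= (g v - g u) * (v - u).

Lemma additive_itv_fun_eq0 p q : p <= q -> D p q = 0.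
Proof.
(* On n.+1 equal pieces of [p, q] the bounds telescope to c / n.+1. *)
move=> pq; set c := (g q - g p) * (q - p).
have D_le n : `|D p q| <= c * harmonic n.
  set d := (q - p) * harmonic n.
  have d0 : 0 <= d by rewrite /d mulr_ge0 ?subr_ge0 ?harmonic_ge0.
  have D_partial k : `|D p (p + k%:R * d)| <= (g (p + k%:R * d) - g p) * d.
    elim: k => [|k IH].
      have Dpp : D p p = 0 by have := D_add (lexx p) (lexx p); lra.
      by rewrite mul0r addr0 Dpp normr0 subrr mul0r.
    set v := p + k%:R * d.
    have -> : p + k.+1%:R * d = v + d by rewrite /v -addn1 natrD mulrDl mul1r addrA.
    have pv : p <= v by rewrite /v lerDl mulr_ge0.
    have vd : v <= v + d by rewrite lerDl.
    rewrite (D_add pv vd); apply: le_trans (ler_normD _ _) _.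
    have -> : (g (v + d) - g p) * d = (g v - g p) * d + (g (v + d) - g v) * d by ring.
    by apply: lerD => //; have := D_small vd; rewrite [v + d - v]addrAC subrr add0r.
  have := D_partial n.+1; have -> : p + n.+1%:R * d = q.
    by rewrite /d /= mulrCA mulfV ?pnatr_eq0 // mulr1 addrC subrK.
  by rewrite /d mulrA.
have c_h : c * harmonic n @[n --> \oo] --> 0.
  by rewrite -(mulr0 c); apply: cvgMr; exact: cvg_harmonic.
apply/normr0_eq0/eqP; rewrite eq_le normr_ge0 andbT.
rewrite -(cvg_lim _ c_h) //; apply: limr_ge; first by apply/cvg_ex; exists 0.
exact: nearW.
Qed.

End additive_interval_function.

Section interval_integrals.
Variable R : realType.
Local Notation mu := (@lebesgue_measure R).

Lemma bounded_between (A : set R) (f : R -> R) m M :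
  (forall x, A x -> m <= f x <= M) -> [bounded f x | x in A].
Proof.
move=> mfM; exists (`|m| + `|M|); split; first by rewrite realE addr_ge0.
move=> r /ltW Mr x /mfM /andP[mf fM]; apply: le_trans Mr; rewrite ler_norml.
have := ler_norm M; have := ler_norm (- m); rewrite normrN.
by have := normr_ge0 M; have := normr_ge0 m; lra.
Qed.

Lemma lebesgue_measure_itv_cc (p q : R) : p <= q -> mu `[p, q] = (q - p)%:E.
Proof.
move=> pq; rewrite lebesgue_measure_itv /= lte_fin.
by case: ltgtP pq => // -> _; rewrite subrr.
Qed.

Lemma bounded_itv_integrable (p q : R) (f : R -> R) m M :
  measurable_fun `[p, q] f -> (forall x, p <= x <= q -> m <= f x <= M) ->
  mu.-integrable `[p, q] (EFin \o f).
Proof.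
move=> mf fmM; apply: measurable_bounded_integrable => //.
  by rewrite /= lebesgue_measure_itv; case: ifP => _; rewrite ?ltry.
by apply: (bounded_between (m := m) (M := M)) => x; rewrite /= in_itv; exact: fmM.
Qed.

Lemma le_integral_measurable (D : set R) (f g : R -> R) : measurable D ->
  measurable_fun D f -> measurable_fun D g -> (forall x, D x -> f x <= g x) ->
  (\int[mu]_(x in D) (f x)%:E <= \int[mu]_(x in D) (g x)%:E)%E.
Proof.
move=> mD mf mg fg; rewrite [leLHS]integralE [leRHS]integralE.
have [mf' mg'] : measurable_fun D (EFin \o f) /\ measurable_fun D (EFin \o g).
  by split; exact/measurable_EFinP.
apply: leeB; apply: ge0_le_integral => //.
- exact: measurable_funepos.
- exact: measurable_funepos.
- move=> x Dx; apply: (@funepos_le _ _ D) => [y /set_mem Dy|].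
    by rewrite lee_fin fg.
  by rewrite inE.
- exact: measurable_funeneg.
- exact: measurable_funeneg.
- move=> x Dx; apply: (@funeneg_le _ _ D) => [y /set_mem Dy|].
    by rewrite lee_fin fg.
  by rewrite inE.
Qed.

Lemma integral_itv_split (f : R -> R) (p q r : R) : p <= q -> q <= r ->
  measurable_fun `[p, r] f ->
  (\int[mu]_(z in `[p, r]) (f z)%:E =
   \int[mu]_(z in `[p, q]) (f z)%:E + \int[mu]_(z in `[q, r]) (f z)%:E)%E.
Proof.
move=> pq qr /measurable_EFinP mfE.
rewrite (@itv_bndbnd_setU _ _ (BLeft p) (BRight q) (BRight r)) ?bnd_simp //.
rewrite integral_setU //=.
- rewrite integral_itv_obnd_cbnd //; apply: measurable_funS mfE => //.
  exact: subset_itvScc.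
- by rewrite -itv_bndbnd_setU ?bnd_simp.
- rewrite disj_set2E; apply/eqP/seteqP; split => z //=.
  by rewrite !in_itv /= => -[/andP[_ zq] /andP[qz _]]; lra.
Qed.

Lemma Rintegral_itv_split (f : R -> R) (p q r : R) : p <= q -> q <= r ->
  mu.-integrable `[p, r] (EFin \o f) ->
  \int[mu]_(z in `[p, r]) f z =
  \int[mu]_(z in `[p, q]) f z + \int[mu]_(z in `[q, r]) f z.
Proof.
move=> pq qr fi; rewrite -(@Rintegral_itv_obnd_cbnd _ q (BRight r)); last first.
  by apply: integrableS fi => //; apply: subset_itvr; rewrite bnd_simp.
have := @Rintegral_itvB R f (BLeft p) (BRight r) q fi.
by rewrite !bnd_simp => /(_ pq qr) <-; rewrite addrC subrK.
Qed.

Lemma le_integral_itv (f g : R -> R) (p q : R) :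
  measurable_fun `[p, q] f -> measurable_fun `[p, q] g ->
  (forall z, p < z < q -> f z <= g z) ->
  (\int[mu]_(z in `[p, q]) (f z)%:E <= \int[mu]_(z in `[p, q]) (g z)%:E)%E.
Proof.
move=> mf mg fg; have sub_oo : `]p, q[ `<=` `[p, q] by exact: subset_itv_oo_cc.
have mf' := measurable_funS (measurable_itv _) sub_oo mf.
have mg' := measurable_funS (measurable_itv _) sub_oo mg.
rewrite !(@integral_itv_bndoo _ p q _ true false); try exact/measurable_EFinP.
by apply: le_integral_measurable => // z; rewrite /= in_itv; exact: fg.
Qed.

End interval_integrals.

Section convex_ftc.
Variables (R : realType) (th : R -> R).
Hypothesis th_cvx : convex_fun th.
Local Notation mu := (@lebesgue_measure R).
Local Notation g := (lderiv th).

Lemma lderiv_integrable p q : mu.-integrable `[p, q] (EFin \o g).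
Proof.
apply: (bounded_itv_integrable (m := g p) (M := g q)).
  exact: measurable_funS (lderiv_measurable th_cvx).
by move=> x /andP[px xq]; rewrite !lderiv_nondecreasing.
Qed.

Lemma Rintegral_lderiv_bounds u v : u <= v ->
  g u * (v - u) <= \int[mu]_(z in `[u, v]) g z <= g v * (v - u).
Proof.
move=> uv; have muE : fine (mu `[u, v]) = v - u.
  by rewrite /= lebesgue_measure_itv_cc.
have cst_int c : mu.-integrable `[u, v] (EFin \o cst c).
  by apply: (bounded_itv_integrable (m := c) (M := c)) => // x _; rewrite lexx.
rewrite -muE -!Rintegral_cst //; apply/andP; split; apply: le_Rintegral => //;
  try exact: lderiv_integrable; try exact: cst_int;
  by move=> x; rewrite /= in_itv /= => /andP[ux xv]; apply: lderiv_nondecreasing.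
Qed.

Lemma integral_lderiv p q : p <= q ->
  (\int[mu]_(z in `[p, q]) (g z)%:E = (th q - th p)%:E)%E.
Proof.
move=> pq; pose D u v := \int[mu]_(z in `[u, v]) g z - (th v - th u).
suff : D p q = 0.
  move=> /eqP; rewrite subr_eq0 => /eqP <-; rewrite fineK //.
  by apply: integrable_fin_num => //; exact: lderiv_integrable.
apply: (additive_itv_fun_eq0 (g := g)) => //.
- move=> u v w uv vw; rewrite /D (Rintegral_itv_split uv vw) //.
    by ring.
  exact: lderiv_integrable.
- move=> u v uv; have /andP[I1 I2] := Rintegral_lderiv_bounds uv.
  have /andP[S1 S2] := lderiv_secant th_cvx uv.
  by rewrite /D ler_norml; apply/andP; split; lra.
Qed.

End convex_ftc.

Lemma leeBlDl_EFin (R : realType) (c : R) (y z : \bar R) :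
  (c%:E <= y + z)%E -> (c%:E - y <= z)%E.
Proof.
by case: y z => [y| |] [z| |] //=; rewrite ?lee_fin ?leey ?leNye //; lra.
Qed.

Definition oriented (R : realType) (J : R -> R -> \bar R) (y0 y : R) : \bar R :=
  if y0 <= y then J y0 y else (- J y y0)%E.

Lemma oriented_oppJ (R : realType) (J : R -> R -> \bar R) y0 y :
  oriented (fun p q => - J p q)%E y0 y = (- oriented J y0 y)%E.
Proof. by rewrite /oriented; case: ifP. Qed.

Section oriented_integral.
Variables (R : realType) (J : R -> R -> \bar R) (a b y0 : R).
Hypotheses (ay0 : a < y0) (y0b : y0 < b).
(* J p q stands for an integral over [p, q], which may be infinite when p = a
   or q = b; additivity is only needed when one of the summands is finite. *)
Hypothesis J_refl : forall p, J p p = 0%E.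
Hypothesis J_fin : forall p q, a < p -> p <= q -> q < b -> J p q \is a fin_num.
Hypothesis J_add : forall p q r, a <= p -> p <= q -> q <= r -> r <= b ->
  J p q \is a fin_num \/ J q r \is a fin_num -> J p r = (J p q + J q r)%E.
Local Notation F := (oriented J y0).

Lemma oriented_fin y : a < y -> y < b -> F y \is a fin_num.
Proof.
move=> ay yb; rewrite /oriented; case: leP => [y0y|yy0]; first exact: J_fin.
by rewrite fin_numN; apply: J_fin => //; exact: ltW.
Qed.

Lemma oriented_increment_ge p q c : a <= p -> p <= q -> q <= b -> a < p \/ q < b ->
  (c%:E <= J p q -> F p + c%:E <= F q)%E.
Proof.
move=> ap; rewrite le_eqVlt => /predU1P[<- _ _|pq qb pq_in cJ].
  by rewrite J_refl => c0; exact: geeDl.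
rewrite /oriented; case: (leP y0 p) => [y0p|py0].
  have Jy0p : J y0 p \is a fin_num by apply: J_fin => //; lra.
  rewrite (le_trans y0p (ltW pq)) (J_add (ltW ay0) y0p (ltW pq) qb (or_introl Jy0p)).
  exact: leeD2l.
case: (leP y0 q) => [y0q|qy0].
  rewrite addeC; apply: leeBlDl_EFin.
  rewrite -J_add ?(ltW py0) //; case: pq_in => [ap'|qb'];
    [left; apply: J_fin | right; apply: J_fin] => //; exact: ltW.
have Jqy0 : J q y0 \is a fin_num by apply: J_fin => //; lra.
rewrite (J_add ap (ltW pq) (ltW qy0) (ltW y0b) (or_intror Jqy0)).
rewrite oppeD ?fin_num_adde_defl // addeAC -[leRHS]add0e; apply: leeD2r.
by rewrite addeC; apply: leeBlDl_EFin; rewrite adde0.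
Qed.

End oriented_integral.

(* Monotonicity is only assumed on pairs with an endpoint inside (a, b); the
   pair (a, b) itself is bridged by y0. *)
Lemma valley_min (R : realType) d (T : porderType d) (g : R -> T) (a b y0 y' : R) :
  a < y0 -> y0 < b -> a <= y' <= b ->
  (forall p q, a <= p -> p <= q -> q <= y' -> a < p \/ q < b -> (g q <= g p)%O) ->
  (forall p q, y' <= p -> p <= q -> q <= b -> a < p \/ q < b -> (g p <= g q)%O) ->
  forall y, a <= y <= b -> (g y' <= g y)%O.
Proof.
move=> ay0 y0b /andP[ay' y'b] down up y /andP[ay yb].
have [yy'|y'y] := leP y y'.
  have [ay_or_y'b|] := boolP ((a < y) || (y' < b)).
    by apply: down => //; case/orP: ay_or_y'b; [left|right].
  rewrite negb_or -!leNgt => /andP[ya by'].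
  by apply: (@le_trans _ _ (g y0)); [apply: down | apply: down]; lra.
have [ay'_or_yb|] := boolP ((a < y') || (y < b)).
  by apply: up => //; [exact: ltW | case/orP: ay'_or_yb; [left|right]].
rewrite negb_or -!leNgt => /andP[y'a b_y].
by apply: (@le_trans _ _ (g y0)); [apply: up | apply: up]; lra.
Qed.

(* The same setting again, so that oriented_increment_ge can be applied to - J. *)
Section oriented_integral_extremum.
Variables (R : realType) (J : R -> R -> \bar R) (a b y0 : R).
Hypotheses (ay0 : a < y0) (y0b : y0 < b).
Hypothesis J_refl : forall p, J p p = 0%E.
Hypothesis J_fin : forall p q, a < p -> p <= q -> q < b -> J p q \is a fin_num.
Hypothesis J_add : forall p q r, a <= p -> p <= q -> q <= r -> r <= b ->
  J p q \is a fin_num \/ J q r \is a fin_num -> J p r = (J p q + J q r)%E.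
Local Notation F := (oriented J y0).

Lemma oriented_increment_le p q c : a <= p -> p <= q -> q <= b -> a < p \/ q < b ->
  (J p q <= c%:E -> F q <= F p + c%:E)%E.
Proof.
move=> ap pq qb pq_in Jc.
have NJ_refl r : (- J r r = 0)%E by rewrite J_refl oppe0.
have NJ_fin r s : a < r -> r <= s -> s < b -> (- J r s)%E \is a fin_num.
  by rewrite fin_numN; exact: J_fin.
have NJ_add r s t : a <= r -> r <= s -> s <= t -> t <= b ->
    (- J r s)%E \is a fin_num \/ (- J s t)%E \is a fin_num ->
    (- J r t = - J r s - J s t)%E.
  move=> ar rs st tb; rewrite !fin_numN => fin_or.
  rewrite (J_add ar rs st tb fin_or) oppeD //.
  by case: fin_or => ?; [exact: fin_num_adde_defr | exact: fin_num_adde_defl].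
have := oriented_increment_ge ay0 y0b NJ_refl NJ_fin NJ_add ap pq qb pq_in (c := - c).
rewrite !oriented_oppJ EFinN leeN2 => /(_ Jc) NF.
by rewrite -leeN2 oppeD ?fin_num_adde_defl.
Qed.

Lemma oriented_chasles p q : a < p -> p <= q -> q < b -> F q = (F p + J p q)%E.
Proof.
move=> ap pq qb; have /fineK Jpq := J_fin ap pq qb.
have [ap' qb'] : a <= p /\ q <= b by split; exact: ltW.
have pq_in : a < p \/ q < b by left.
apply/le_anti/andP; split; rewrite -Jpq.
- by apply: oriented_increment_le; rewrite ?Jpq ?lexx.
- by apply: (oriented_increment_ge ay0 y0b J_refl J_fin J_add); rewrite ?Jpq ?lexx.
Qed.

Let minus_oriented_shift (h : R -> R) p q :
  (- F p + (h p)%:E = - (F p + (h q - h p)%:E) + (h q)%:E)%E.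
Proof.
by rewrite oppeD ?fin_num_adde_defl // -addeA -EFinN -EFinD; congr (_ + _%:E)%E; ring.
Qed.

Lemma oriented_descent (h : R -> R) p q : a <= p -> p <= q -> q <= b ->
  a < p \/ q < b -> ((h q - h p)%:E <= J p q ->
  - F q + (h q)%:E <= - F p + (h p)%:E)%E.
Proof.
move=> ap pq qb pq_in.
move=> /(oriented_increment_ge ay0 y0b J_refl J_fin J_add ap pq qb pq_in) Fpq.
by rewrite (minus_oriented_shift h p q); apply: leeD2r; rewrite leeN2.
Qed.

Lemma oriented_ascent (h : R -> R) p q : a <= p -> p <= q -> q <= b ->
  a < p \/ q < b -> (J p q <= (h q - h p)%:E ->
  - F p + (h p)%:E <= - F q + (h q)%:E)%E.
Proof.
move=> ap pq qb pq_in /(oriented_increment_le ap pq qb pq_in) Fpq.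
by rewrite (minus_oriented_shift h p q); apply: leeD2r; rewrite leeN2.
Qed.

Lemma oriented_argmin (h : R -> R) y' : a <= y' <= b ->
  (forall p q, a <= p -> p <= q -> q <= y' -> ((h q - h p)%:E <= J p q)%E) ->
  (forall p q, y' <= p -> p <= q -> q <= b -> (J p q <= (h q - h p)%:E)%E) ->
  forall y, a <= y <= b -> (- F y' + (h y')%:E <= - F y + (h y)%:E)%E.
Proof.
move=> /andP[ay' y'b] hJ Jh.
apply: (valley_min (g := fun y => - F y + (h y)%:E)%E) ay0 y0b _ _ _; rewrite ?ay' //.
- move=> p q ap pq qy' pq_in; apply: oriented_descent => //; last exact: hJ.
  exact: le_trans y'b.
- move=> p q y'p pq qb pq_in; apply: oriented_ascent => //; last exact: Jh.
  exact: le_trans y'p.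
Qed.

Lemma oriented_argmax (h : R -> R) y' : a <= y' <= b ->
  (forall p q, a <= p -> p <= q -> q <= y' -> (J p q <= (h q - h p)%:E)%E) ->
  (forall p q, y' <= p -> p <= q -> q <= b -> ((h q - h p)%:E <= J p q)%E) ->
  forall y, a <= y <= b -> (- F y + (h y)%:E <= - F y' + (h y')%:E)%E.
Proof.
move=> /andP[ay' y'b] Jh hJ.
apply: (valley_min (T := (\bar R)^d) (g := fun y => - F y + (h y)%:E)%E) ay0 y0b _ _ _;
  rewrite ?ay' //.
- move=> p q ap pq qy' pq_in; apply: oriented_ascent => //; last exact: Jh.
  exact: le_trans y'b.
- move=> p q y'p pq qb pq_in; apply: oriented_descent => //; last exact: hJ.
  exact: le_trans y'p.
Qed.

End oriented_integral_extremum.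

Lemma nondecreasing_itv_measurable (R : realType) (S : R -> R) (a b : R) :
  {in `]a, b[ &, {homo S : u v / u <= v}} -> measurable_fun `]a, b[ S.
Proof.
move=> S_nd; apply: (measurability (@RGenCInfty.G R)) => [|_ [_ [r ->] <-]].
  exact: RGenCInfty.measurableE.
apply: is_interval_measurable => s t /= [sab Ss] [tab St] u /andP[su ut].
have uab : u \in `]a, b[.
  by move: sab tab; rewrite !in_itv /=; lra.
split=> //; move: Ss; rewrite /= !in_itv /= !andbT => Ss.
by rewrite (le_trans Ss) ?S_nd.
Qed.

Section psi_of_monotone.
Variables (R : realType) (th S : R -> R) (a b y0 : R).
Hypothesis th_cvx : convex_fun th.
Hypotheses (ay0 : a < y0) (y0b : y0 < b).
Hypothesis S_mono : {in `]a, b[ &, {homo S : u v / u <= v}} \/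
                    {in `]a, b[ &, {homo S : u v /~ u <= v}}.
Local Notation mu := (@lebesgue_measure R).
Let f z := lderiv th (z - S z).
Let J p q := (\int[mu]_(z in `[p, q]) (f z)%:E)%E.
Local Notation psi_ := (psi th S y0).

Let psiE : psi_ = oriented J y0. Proof. by []. Qed.

Let S_measurable : measurable_fun `]a, b[ S.
Proof.
case: S_mono => [S_nd|S_ni]; first exact: nondecreasing_itv_measurable.
rewrite -(opprK S); apply: measurable_funN; apply: nondecreasing_itv_measurable.
by move=> u v uab vab uv; rewrite lerN2 S_ni.
Qed.

Let S_between p q z : a < p -> p <= z <= q -> q < b ->
  Num.min (S p) (S q) <= S z <= Num.max (S p) (S q).
Proof.
move=> ap /andP[pz zq] qb.
have [pab zab qab] : [/\ p \in `]a, b[, z \in `]a, b[ & q \in `]a, b[].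
  by rewrite !in_itv /=; split; apply/andP; split; lra.
rewrite ge_min le_max; case: S_mono => S_m.
- by rewrite (S_m p z) ?(S_m z q) ?orbT.
- by rewrite (S_m q z) ?(S_m z p) ?orbT.
Qed.

Let f_measurable : measurable_fun `[a, b] f.
Proof.
apply: (@measurable_fun_itv_cc _ _ _ false true).
apply: measurableT_comp; first exact: lderiv_measurable.
exact: measurable_funB.
Qed.

Let f_integrable p q : a < p -> q < b -> mu.-integrable `[p, q] (EFin \o f).
Proof.
move=> ap qb; apply: (bounded_itv_integrable
    (m := lderiv th (p - Num.max (S p) (S q)))
    (M := lderiv th (q - Num.min (S p) (S q)))).
  apply: measurable_funS f_measurable => //.
  by apply: subset_itvScc; rewrite bnd_simp ltW.
move=> z pzq; have /andP[mz zM] := S_between ap pzq qb; case/andP: pzq => pz zq.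
by rewrite /f !lderiv_nondecreasing //; lra.
Qed.

Let J_refl p : J p p = 0%E.
Proof. by rewrite /J set_itv1 integral_set1. Qed.

Let J_fin p q : a < p -> p <= q -> q < b -> J p q \is a fin_num.
Proof. by move=> ap _ qb; apply: integrable_fin_num => //; exact: f_integrable. Qed.

Let J_add p q r : a <= p -> p <= q -> q <= r -> r <= b ->
  J p q \is a fin_num \/ J q r \is a fin_num -> J p r = (J p q + J q r)%E.
Proof.
move=> ap pq qr rb _; apply: integral_itv_split => //.
by apply: measurable_funS f_measurable => //; apply: subset_itvScc.
Qed.

Let lderiv_shift_measurable (x : R) (D : set R) :
  measurable_fun D (fun z => lderiv th (z - x)).
Proof.
by apply: measurableT_comp; [exact: lderiv_measurable | exact: measurable_funB].
Qed.

Let J_ge x p q : a <= p -> p <= q -> q <= b ->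
  (forall z, p < z < q -> lderiv th (z - x) <= f z) ->
  ((th (q - x) - th (p - x))%:E <= J p q)%E.
Proof.
move=> ap pq qb fx; rewrite -(integral_lderiv (convex_fun_shift x th_cvx) pq).
under eq_integral do rewrite lderiv_shift.
apply: le_integral_itv fx => //.
by apply: measurable_funS f_measurable => //; apply: subset_itvScc.
Qed.

Let J_le x p q : a <= p -> p <= q -> q <= b ->
  (forall z, p < z < q -> f z <= lderiv th (z - x)) ->
  (J p q <= (th (q - x) - th (p - x))%:E)%E.
Proof.
move=> ap pq qb fx; rewrite -(integral_lderiv (convex_fun_shift x th_cvx) pq).
under [X in (_ <= X)%E]eq_integral do rewrite lderiv_shift.
apply: le_integral_itv fx => //.
by apply: measurable_funS f_measurable => //; apply: subset_itvScc.
Qed.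

Lemma psi_fin y : a < y -> y < b -> psi_ y \is a fin_num.
Proof. by rewrite psiE; exact: (oriented_fin ay0). Qed.

Lemma psi_continuous : {within `]a, b[, continuous psi_}.
Proof.
apply: continuous_in_subspaceT => y; rewrite inE /= in_itv /= => /andP[ay yb].
pose p := (a + y) / 2; pose q := (y + b) / 2.
have [ap py yq qb] : [/\ a < p, p < y, y < q & q < b] by split; rewrite /p /q; lra.
(* Near y, psi is a constant plus the parameterized integral G. *)
pose G z := parameterized_integral mu p z f.
have G_cont : G @ y --> G y.
  have := parameterized_integral_continuous (ltW (lt_trans py yq)) (f_integrable ap qb).
  move=> /(_ y); rewrite /continuous_at -nbhs_subspace_interior //.
  by rewrite interior_itv_bnd /= in_itv /= py yq.
have psi_near : {near y, (fun z => fine (psi_ p) + G z) =1 fine \o psi_}.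
  near=> z; have : z \in `]p, q[.
    by near: z; apply: near_in_itvoo; rewrite in_itv /= py yq.
  rewrite in_itv /= => /andP[pz zq].
  rewrite /= psiE.
  rewrite (oriented_chasles ay0 y0b J_refl J_fin J_add ap (ltW pz) (lt_trans zq qb)).
  have Fp_fin : oriented J y0 p \is a fin_num by rewrite -psiE psi_fin //; lra.
  by rewrite fineD // J_fin //; lra.
rewrite /continuous_at -(fineK (psi_fin ay yb)); apply: cvg_EFin.
  have : \forall z \near y, z \in `]a, b[.
    by apply: near_in_itvoo; rewrite in_itv /= ay yb.
  by apply: filterS => z; rewrite in_itv /= => /andP[]; exact: psi_fin.
apply: cvg_trans (near_eq_cvg psi_near) _.
have /= <- := nbhs_singleton psi_near; apply: cvgD G_cont; exact: cvg_cst.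
Unshelve. all: by end_near.
Qed.

Lemma psi_argmin x y' : a <= y' <= b ->
  (forall z, a < z < y' -> S z <= x) -> (forall z, y' < z < b -> x <= S z) ->
  forall y, a <= y <= b ->
  (- psi_ y' + (th (y' - x))%:E <= - psi_ y + (th (y - x))%:E)%E.
Proof.
move=> y'ab S_left S_right; rewrite psiE.
apply: (oriented_argmin ay0 y0b J_refl J_fin J_add) => // p q ap pq qy'.
- apply: J_ge => // [|z /andP[pz zq]]; first by case/andP: y'ab => _; exact: le_trans.
  by rewrite /f lderiv_nondecreasing // lerD2l lerN2 S_left //; lra.
- apply: J_le => // [|z /andP[pz zq]].
    by case/andP: y'ab => ay' _; exact: le_trans ap.
  by rewrite /f lderiv_nondecreasing // lerD2l lerN2 S_right //; lra.
Qed.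

Lemma psi_argmax x y' : a <= y' <= b ->
  (forall z, a < z < y' -> x <= S z) -> (forall z, y' < z < b -> S z <= x) ->
  forall y, a <= y <= b ->
  (- psi_ y + (th (y - x))%:E <= - psi_ y' + (th (y' - x))%:E)%E.
Proof.
move=> y'ab S_left S_right; rewrite psiE.
apply: (oriented_argmax ay0 y0b J_refl J_fin J_add) => // p q ap pq qy'.
- apply: J_le => // [|z /andP[pz zq]]; first by case/andP: y'ab => _; exact: le_trans.
  by rewrite /f lderiv_nondecreasing // lerD2l lerN2 S_left //; lra.
- apply: J_ge => // [|z /andP[pz zq]].
    by case/andP: y'ab => ay' _; exact: le_trans ap.
  by rewrite /f lderiv_nondecreasing // lerD2l lerN2 S_right //; lra.
Qed.

End psi_of_monotone.

Section hull_bounds.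
Variables (R : realType) (A : set R) (a b : R).
Hypothesis hull : closure (co A) = [set` `[a, b]].
Hypothesis ab : a <= b.

Let hull_sub_closed_convex (C : set R) : convexR C -> closed C -> A `<=` C ->
  `[a, b] `<=` C.
Proof.
move=> cC clC AC; rewrite -hull (closure_id C).1 //; apply: closure_subset.
by move=> y coAy; exact: coAy.
Qed.

Lemma hull_exists_lt z : a < z -> exists2 y, A y & y < z.
Proof.
move=> az; apply: contrapT => noA.
have cC : convexR [set y | z <= y].
  move=> u w t /= zu zw t0 t1.
  have : 0 <= t * (u - z) by rewrite mulr_ge0 // subr_ge0.
  have : 0 <= (1 - t) * (w - z) by rewrite mulr_ge0 // subr_ge0.
  lra.
have AC : A `<=` [set y | z <= y].
  by move=> y Ay; rewrite /= leNgt; apply/negP => yz; apply: noA; exists y.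
have /(_ a) := hull_sub_closed_convex cC (closed_ge (y := z)) AC.
by rewrite /= in_itv /= lexx ab => /(_ isT); lra.
Qed.

Lemma hull_exists_gt z : z < b -> exists2 y, A y & z < y.
Proof.
move=> zb; apply: contrapT => noA.
have cC : convexR [set y | y <= z].
  move=> u w t /= uz wz t0 t1.
  have : 0 <= t * (z - u) by rewrite mulr_ge0 // subr_ge0.
  have : 0 <= (1 - t) * (z - w) by rewrite mulr_ge0 // subr_ge0.
  lra.
have AC : A `<=` [set y | y <= z].
  by move=> y Ay; rewrite /= leNgt; apply/negP => zy; apply: noA; exists y.
have /(_ b) := hull_sub_closed_convex cC (closed_le (y := z)) AC.
by rewrite /= in_itv /= lexx ab => /(_ isT); lra.
Qed.

End hull_bounds.

Section lower_inverse.
Variables (R : realType) (I : set R) (T : R -> R) (a b : R).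
Hypothesis hull : closure (co (T @` I)) = [set` `[a, b]].
Hypothesis ab : a <= b.
Hypothesis T_nd : {in I &, {homo T : x y / x <= y}}.

Lemma Slow_le z x : a < z -> I x -> z <= T x -> Slow I T z <= x.
Proof.
move=> az Ix zTx; apply: ge_inf => //.
have [_ [x0 Ix0 <-] Tx0z] := hull_exists_lt hull ab az.
exists x0 => x' [Ix' zTx']; rewrite leNgt; apply/negP => x'x0.
have := T_nd (mem_set Ix') (mem_set Ix0) (ltW x'x0); lra.
Qed.

Lemma Slow_ge z m : z < b -> (forall x, I x -> z <= T x -> m <= x) -> m <= Slow I T z.
Proof.
move=> zb lb; apply: lb_le_inf => [|x [Ix zTx]]; last exact: lb.
by have [_ [x Ix <-] zTx] := hull_exists_gt hull ab zb; exists x; split; rewrite // ltW.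
Qed.

Lemma Slow_nondecreasing : {in `]a, b[ &, {homo Slow I T : u v / u <= v}}.
Proof.
move=> u v; rewrite !in_itv /= => /andP[au _] /andP[_ vb] uv.
by apply: Slow_ge => // x Ix vTx; apply: Slow_le => //; exact: le_trans vTx.
Qed.

Lemma Slow_crossing x y' : I x -> (Tleft I T x <= y'%:E)%E -> y' <= T x ->
  (forall z, a < z < y' -> Slow I T z <= x) /\
  (forall z, y' < z < b -> x <= Slow I T z).
Proof.
move=> Ix Tl y'T; split => z /andP[z1 z2].
  by apply: Slow_le => //; lra.
apply: Slow_ge => // x' Ix' zTx'; rewrite leNgt; apply/negP => x'x.
have : ((T x')%:E <= Tleft I T x)%E by apply: ereal_sup_ubound; exists x'.
by move=> /le_trans/(_ Tl); rewrite lee_fin; lra.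
Qed.

End lower_inverse.

Section upper_inverse.
Variables (R : realType) (I : set R) (T : R -> R) (a b : R).
Hypothesis hull : closure (co (T @` I)) = [set` `[a, b]].
Hypothesis ab : a <= b.
Hypothesis T_ni : {in I &, {homo T : x y /~ x <= y}}.
(* The reflection x |-> -x reduces Shigh to -Slow. *)
Let I' := [set x | I (- x)].
Let T' x := T (- x).

Let image_reflect : T' @` I' = T @` I.
Proof.
apply/seteqP; split=> _ [x Ix <-]; first by exists (- x).
by exists (- x); rewrite /I' /T' /= opprK.
Qed.

Let hull' : closure (co (T' @` I')) = [set` `[a, b]].
Proof. by rewrite image_reflect. Qed.

Let T'_nd : {in I' &, {homo T' : x y / x <= y}}.
Proof. by move=> x y /set_mem Ix /set_mem Iy xy; apply: T_ni; rewrite ?inE ?lerN2. Qed.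

Let ShighE z : Shigh I T z = - Slow I' T' z.
Proof.
rewrite /Slow /inf opprK; congr sup; apply/seteqP; split=> x.
  by move=> [Ix zTx]; exists (- x); rewrite /I' /T' /= ?opprK.
by move=> [u [Iu zTu] <-].
Qed.

Let TrightE x : Tright I T x = Tleft I' T' (- x).
Proof.
congr ereal_sup; apply/seteqP; split=> _ [x' [Ix' xx'] <-].
  by exists (- x'); rewrite /I' /T' /= ?opprK ?ltrN2.
by exists (- x'); rewrite //= ltrNr.
Qed.

Lemma Shigh_nonincreasing : {in `]a, b[ &, {homo Shigh I T : u v /~ u <= v}}.
Proof.
move=> u v uab vab uv; rewrite !ShighE lerN2.
exact: (Slow_nondecreasing hull' ab T'_nd vab uab uv).
Qed.

Lemma Shigh_crossing x y' : I x -> (Tright I T x <= y'%:E)%E -> y' <= T x ->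
  (forall z, a < z < y' -> x <= Shigh I T z) /\
  (forall z, y' < z < b -> Shigh I T z <= x).
Proof.
move=> Ix; rewrite TrightE => Tl y'T.
have Ix' : I' (- x) by rewrite /I' /= opprK.
have y'T' : y' <= T' (- x) by rewrite /T' opprK.
have [left right] := Slow_crossing hull' ab T'_nd Ix' Tl y'T'.
split=> z zab; rewrite ShighE.
  by rewrite lerNr; exact: left.
by rewrite lerNl; exact: right.
Qed.

End upper_inverse.

Lemma ereal_inf_attained (T : Type) (R : realType) (A : set T) (g : T -> \bar R) y' :
  A y' -> (forall y, A y -> g y' <= g y)%E -> ereal_inf (g @` A) = g y'.
Proof.
move=> Ay' g_min; apply/le_anti/andP; split.
  by apply: ereal_inf_lbound; exists y'.
by apply: le_ereal_inf_tmp => _ [y Ay <-]; exact: g_min.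
Qed.

Lemma ereal_sup_attained (T : Type) (R : realType) (A : set T) (g : T -> \bar R) y' :
  A y' -> (forall y, A y -> g y <= g y')%E -> ereal_sup (g @` A) = g y'.
Proof.
move=> Ay' g_max; apply/le_anti/andP; split.
  by apply: ge_ereal_sup => _ [y Ay <-]; exact: g_max.
by apply: ereal_sup_ubound; exists y'.
Qed.

Theorem lemma3p14 (R : realType) (th : R -> R) (I : set R) (T : R -> R)
    (a b y0 : R) :
  convex_fun th ->
  closure (co (T @` I)) = [set` `[a, b]] ->
  a < y0 < b ->
  (* (a) nondecreasing case *)
  ({in I &, {homo T : x y / x <= y}} ->
     let psi_ := psi th (Slow I T) y0 in
     (forall y, a < y < b -> psi_ y \is a fin_num) /\
     {within [set` `]a, b[], continuous psi_} /\
     (forall x y', I x -> (Tleft I T x <= y'%:E)%E -> y' <= T x -> a <= y' <= b ->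
        (- psi_ y' + (th (y' - x))%:E)%E =
        ereal_inf [set (- psi_ y + (th (y - x))%:E)%E | y in [set` `[a, b]]])) /\
  (* (b) nonincreasing case *)
  ({in I &, {homo T : x y /~ x <= y}} ->
     let psi_ := psi th (Shigh I T) y0 in
     (forall y, a < y < b -> psi_ y \is a fin_num) /\
     {within [set` `]a, b[], continuous psi_} /\
     (forall x y', I x -> (Tright I T x <= y'%:E)%E -> y' <= T x -> a <= y' <= b ->
        (- psi_ y' + (th (y' - x))%:E)%E =
        ereal_sup [set (- psi_ y + (th (y - x))%:E)%E | y in [set` `[a, b]]])).
Proof.
move=> th_cvx hull /andP[ay0 y0b]; have ab : a <= b by rewrite ltW // (lt_trans ay0).
split=> T_mono psi_; rewrite {}/psi_.
- have S_nd := Slow_nondecreasing hull ab T_mono.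
  split.
    by move=> y /andP[ay yb]; exact: (psi_fin th_cvx ay0 y0b (or_introl S_nd) ay yb).
  split; first exact: (psi_continuous th_cvx ay0 y0b (or_introl S_nd)).
  move=> x y' Ix Tl y'T y'ab.
  have [left right] := Slow_crossing hull ab T_mono Ix Tl y'T.
  apply/esym/ereal_inf_attained => [|y]; rewrite /= in_itv //= => yab.
  exact: (psi_argmin th_cvx ay0 y0b (or_introl S_nd) y'ab left right).
- have S_ni := Shigh_nonincreasing hull ab T_mono.
  split.
    by move=> y /andP[ay yb]; exact: (psi_fin th_cvx ay0 y0b (or_intror S_ni) ay yb).
  split; first exact: (psi_continuous th_cvx ay0 y0b (or_intror S_ni)).
  move=> x y' Ix Tr y'T y'ab.
  have [left right] := Shigh_crossing hull ab T_mono Ix Tr y'T.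
  apply/esym/ereal_sup_attained => [|y]; rewrite /= in_itv //= => yab.
  exact: (psi_argmax th_cvx ay0 y0b (or_intror S_ni) y'ab left right).
Qed.
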